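(* Let $(Z,\Delta)$ be a foliated surface. Every regular leaf of $\Delta$ is non-special; equivalently, every special leaf of $\Delta$ is singular.
   Context: A foliated surface is a pair $(Z,\Delta)$ with $Z$ a two-dimensional topological manifold (possibly with boundary) and $\Delta$ a one-dimensional foliation on $Z$ such that each connected component of $\partial Z$ is a leaf. For $A\subset Z$ its saturation $\mathrm{Sat}(A)$ is the union of all leaves meeting $A$. For a leaf $\omega$ let $\mathrm{hcl}(\omega)=\bigcap_{N}\overline{\mathrm{Sat}(N)}$, where $N$ runs over all open neighbourhoods of $\omega$; $\omega$ is special if $\omega\neq\mathrm{hcl}(\omega)$. A leaf $\omega\subset \operatorname{Int} Z$ is regular if there is a saturated neighbourhood $U$ of $\omega$ such that $(\overline{U},U)$ is foliated homeomorphic (leaves to leaves) to $(\mathbb{R}\times[-1,1],\mathbb{R}\times(-1,1))$ foliated by horizontal lines, with $\omega$ going to $\mathbb{R}\times 0$; a leaf $\omega\subset\partial Z$ is regular if there is such $U$ with $(\overline{U},U)$ foliated homeomorphic to $(\mathbb{R}\times[0,1],\mathbb{R}\times[0,1))$ with $\omega$ going to $\mathbb{R}\times 0$. Non-regular leaves are singular. *)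

From HB Require Import structures.
From mathcomp Require Import all_boot all_order all_algebra.
From mathcomp Require Import all_classical all_reals all_analysis.
From mathcomp Require Import Rstruct Rstruct_topology.
Set Implicit Arguments. Unset Strict Implicit. Unset Printing Implicit Defensive.
Import Order.TTheory GRing.Theory Num.Theory.
Local Open Scope classical_set_scope.
Local Open Scope ring_scope.

Definition plane := (Rdefinitions.R * Rdefinitions.R)%type.
Notation R := Rdefinitions.R.

Definition homeo_on (X Y : topologicalType) (f : X -> Y) (g : Y -> X)
    (A : set X) (B : set Y) : Prop :=
  [/\ f @` A = B, (forall x, A x -> g (f x) = x),
      (forall y, B y -> f (g y) = y),
      {within A, continuous f} & {within B, continuous g}].

(** Models of foliated charts: (-1,1)x(-1,1) and (-1,1)x[0,1),
    both foliated by horizontal segments. *)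
Definition int_model : set plane :=
  [set q | -1 < q.1 < 1 /\ -1 < q.2 < 1].
Definition bd_model : set plane :=
  [set q | -1 < q.1 < 1 /\ 0 <= q.2 < 1].

Definition hline (c : R) : set plane := [set q | q.2 = c].

Section Foliation.
Variable Z : topologicalType.

Definition interior_pts : set Z :=
  [set p | exists (W : set Z) (V : set plane) (f : Z -> plane) (g : plane -> Z),
     [/\ open W, W p, open V & homeo_on f g W V]].
Definition boundary_pts : set Z := ~` interior_pts.

Definition half_plane : set plane := [set q | 0 <= q.2].
Definition is_surface : Prop :=
  [/\ hausdorff_space Z, @second_countable Z &
      forall p : Z, exists (W : set Z) (O : set plane) (f : Z -> plane)
        (g : plane -> Z),
        [/\ open W, W p, open O & homeo_on f g W (O `&` half_plane)]].

Variable Delta : set (set Z).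

(** a foliated chart for the partition Delta: a homeomorphism of an open
    set W onto a model M such that every leaf meets W in a union of
    horizontal segments (plaques) *)
Definition fol_chart (W : set Z) (f : Z -> plane) (g : plane -> Z)
    (M : set plane) : Prop :=
  [/\ open W, M = int_model \/ M = bd_model, homeo_on f g W M &
      forall L, Delta L -> exists S : set R,
        f @` (L `&` W) = M `&` [set q | S q.2]].

Definition plaque (P : set Z) : Prop :=
  exists W f g M c, fol_chart W f g M /\ P = g @` (M `&` hline c) /\
                    (M `&` hline c) !=set0.

Definition is_foliation : Prop :=
  [/\ (forall L, Delta L -> L !=set0),
      (forall x : Z, exists L, Delta L /\ L x),
      (forall L L', Delta L -> Delta L' -> L `&` L' !=set0 -> L = L'),
      (forall p : Z, exists W f g M, fol_chart W f g M /\ W p) &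
      (forall L, Delta L -> forall x y, L x -> L y ->
         exists (n : nat) (P : nat -> set Z),
           [/\ forall i, (i <= n)%N -> plaque (P i) /\ P i `<=` L,
               P 0%N x, P n y &
               forall i, (i < n)%N -> P i `&` P i.+1 !=set0])].

Definition foliated_surface : Prop :=
  [/\ is_surface, is_foliation &
      forall x, boundary_pts x -> Delta (connected_component boundary_pts x)].

Definition Sat (A : set Z) : set Z :=
  [set x | exists L, [/\ Delta L, L x & L `&` A !=set0]].

Definition hcl (omega : set Z) : set Z :=
  [set x | forall N : set Z, open N -> omega `<=` N -> closure (Sat N) x].

Definition special (omega : set Z) : Prop := omega <> hcl omega.

Definition sat_nbhd (omega U : set Z) : Prop :=
  Sat U = U /\ exists O, [/\ open O, omega `<=` O & O `<=` U].

(** regular leaf in the interior: (cl U, U) is foliated homeomorphic to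
    (R x [-1,1], R x (-1,1)) with horizontal foliation, omega -> R x 0.
    Leaves to leaves: the horizontal lines R x c, -1<c<1, go to leaves of
    Delta (U is saturated), and the lines R x {-1}, R x {1} in the
    frontier lie in leaves of Delta. *)
Definition regular_int (omega : set Z) : Prop :=
  exists U (h : Z -> plane) (g : plane -> Z),
  [/\ sat_nbhd omega U,
      homeo_on h g (closure U) [set q | -1 <= q.2 <= 1],
      h @` U = [set q | -1 < q.2 < 1],
      omega = g @` hline 0 &
      (forall c : R, -1 < c < 1 -> Delta (g @` hline c)) /\
      (forall c : R, c = -1 \/ c = 1 -> exists L, Delta L /\ g @` hline c `<=` L)].

Definition regular_bd (omega : set Z) : Prop :=
  exists U (h : Z -> plane) (g : plane -> Z),
  [/\ sat_nbhd omega U,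
      homeo_on h g (closure U) [set q | 0 <= q.2 <= 1],
      h @` U = [set q | 0 <= q.2 < 1],
      omega = g @` hline 0 &
      (forall c : R, 0 <= c < 1 -> Delta (g @` hline c)) /\
      (exists L, Delta L /\ g @` hline 1 `<=` L)].

Definition regular (omega : set Z) : Prop :=
  (omega `<=` interior_pts /\ regular_int omega) \/
  (omega `<=` boundary_pts /\ regular_bd omega).

Definition singular (omega : set Z) : Prop := ~ regular omega.

End Foliation.

From mathcomp Require Import all_boot all_order all_algebra.
From mathcomp Require Import all_classical all_reals all_analysis.
From mathcomp Require Import Rstruct Rstruct_topology lra.
Set Implicit Arguments.
Unset Strict Implicit.
Unset Printing Implicit Defensive.

Import Order.TTheory GRing.Theory Num.Theory.
Local Open Scope classical_set_scope.
Local Open Scope ring_scope.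

(* In the model neighbourhood of a regular leaf omega the height coordinate k
   is continuous on the closure of U and constant along leaves.  Hence the
   saturation of the open band {|k| < e} around omega stays in the closed band
   {|k| <= e} of cl U, so hcl omega lies in {k = 0} = omega. *)

Section SubspacePreimage.
Variables (T U : topologicalType) (A : set T) (f : T -> U).
Hypothesis f_cont : {within A, continuous f}.

Lemma open_setI_preimage (O : set T) (V : set U) :
  open O -> O `<=` A -> open V -> open (O `&` f @^-1` V).
Proof.
move=> oO OA oV.
have /open_subspaceP[W oW WA] : open (f @^-1` V : set (subspace A)).
  by move/continuousP : f_cont; apply.
suff -> : O `&` f @^-1` V = O `&` W by exact: openI.
apply/seteqP; split=> x [Ox xV]; split=> //.
- by have [] : (W `&` A) x by rewrite WA; split=> //; exact: OA.
- by have [] : (f @^-1` V `&` A) x by rewrite -WA; split=> //; exact: OA.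
Qed.

Lemma closed_setI_preimage (C : set U) :
  closed A -> closed C -> closed (A `&` f @^-1` C).
Proof.
move=> cA cC; rewrite closed_setSI //.
by move/continuous_closedP : f_cont; apply.
Qed.

End SubspacePreimage.

Lemma open_norm_lt (e : R) : open [set t : R | `|t| < e].
Proof.
apply: (@open_comp _ _ (@Num.norm _ R) [set t | t < e]); last exact: open_lt.
by move=> t _; exact: (@norm_continuous R R^o).
Qed.

Lemma closed_norm_le (e : R) : closed [set t : R | `|t| <= e].
Proof.
apply: (@preimage_closed _ _ (@Num.norm _ R) [set t | t <= e]).
  by move=> t _; exact: (@norm_continuous R R^o).
exact: closed_le.
Qed.

Section RegularLeaf.
Variables (Z : topologicalType) (Delta : set (set Z)).

Lemma leaf_sub_hcl omega : Delta omega -> omega `<=` hcl Delta omega.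
Proof.
move=> Dom x omx N _ omN; apply: subset_closure.
by exists omega; split=> //; exists x; split=> //; exact: omN.
Qed.

Hypothesis leaf_uniq :
  forall L L', Delta L -> Delta L' -> L `&` L' !=set0 -> L = L'.

Variables (omega U O : set Z) (h : Z -> plane) (g : plane -> Z) (I J : set R).
Hypotheses (oO : open O) (omO : omega `<=` O) (OU : O `<=` U).
Hypotheses (hg : homeo_on h g (closure U) [set q | J q.2])
  (hU : h @` U = [set q | I q.2]) (omega_def : omega = g @` hline 0).
Hypotheses (level_leaf : forall c, I c -> Delta (g @` hline c))
  (IJ : I `<=` J) (I0 : I 0).

Let k z := (h z).2.

Lemma k_cont : {within closure U, continuous k}.
Proof.
case: hg => _ _ _ h_cont _ x.
by apply: continuous_comp; [exact: h_cont | exact: cvg_snd].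
Qed.

Lemma g_sub_closure q : J q.2 -> closure U (g q).
Proof.
case: hg => hUJ hK _ _ _ Jq.
by have : [set q | J q.2] q by []; rewrite -hUJ => -[z Uz <-]; rewrite hK.
Qed.

Lemma k_g q : J q.2 -> k (g q) = q.2.
Proof. by case: hg => _ _ gK _ _ Jq; rewrite /k gK. Qed.

Lemma level_k y : U y -> I (k y).
Proof. by move=> Uy; have : [set q | I q.2] (h y) by rewrite -hU; exists y. Qed.

Lemma leaf_through y L : U y -> Delta L -> L y -> L = g @` hline (k y).
Proof.
move=> Uy DL Ly; apply: leaf_uniq => //; first exact/level_leaf/level_k.
exists y; split=> //; exists (h y) => //.
by case: hg => _ hK _ _ _; rewrite hK //; exact: subset_closure.
Qed.

Lemma Sat_sub_level N : N `<=` U ->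
  Sat Delta N `<=` [set z | closure U z /\ exists2 y, N y & k z = k y].
Proof.
move=> NU z [L [DL Lz [y [Ly Ny]]]].
move: Lz; rewrite (leaf_through (NU _ Ny) DL Ly) => -[q /= qy <-].
have Jq : J q.2 by rewrite qy; exact/IJ/level_k/NU.
by split; [exact: g_sub_closure | exists y; rewrite // k_g].
Qed.

Lemma k_omega z : omega z -> k z = 0.
Proof. by rewrite omega_def => -[q /= q0 <-]; rewrite k_g q0 //; exact: IJ. Qed.

Lemma k0_omega z : closure U z -> k z = 0 -> omega z.
Proof.
by move=> Uz kz0; rewrite omega_def; exists (h z) => //; case: hg => _ hK _ _ _; rewrite hK.
Qed.

Lemma hcl_band x e : hcl Delta omega x -> 0 < e -> closure U x /\ `|k x| <= e.
Proof.
move=> hx e0; pose N := O `&` k @^-1` [set t | `|t| < e].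
have oN : open N.
  apply: (open_setI_preimage k_cont) => //; first by move=> z /OU/subset_closure.
  exact: open_norm_lt.
have omN : omega `<=` N by move=> z omz; split; rewrite /= ?k_omega ?normr0 //; exact: omO.
pose band := closure U `&` k @^-1` [set t | `|t| <= e].
have cband : closed band.
  apply: (closed_setI_preimage k_cont); first exact: closed_closure.
  exact: closed_norm_le.
suff : closure (Sat Delta N) `<=` band by apply; exact: hx.
rewrite (closure_id band).1 //; apply: closureS => z.
have NU : N `<=` U by move=> s [/OU].
move=> /(Sat_sub_level NU) [Uz [y [_ /= ky] kzy]].
by split=> //=; rewrite kzy ltW.
Qed.

Lemma hcl_sub_leaf : hcl Delta omega `<=` omega.
Proof.
move=> x hx; have [Ux _] := hcl_band hx ltr01.
apply: k0_omega => //; apply/eqP; rewrite -normr_le0.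
by apply/ler_addgt0Pr => e /(hcl_band hx)[]; rewrite add0r.
Qed.

End RegularLeaf.

Theorem lemma2p6 (Z : topologicalType) (Delta : set (set Z)) :
  foliated_surface Delta ->
  forall omega : set Z, Delta omega -> regular Delta omega -> ~ special Delta omega.
Proof.
move=> [_ [_ _ leaf_uniq _ _] _] omega Dom reg; apply; apply/seteqP.
split; first exact: leaf_sub_hcl.
case: reg => [] [_ [U [h [g [ [_ [V [oV omV VU]]] hg hU om_def [lev _]]]]]].
- have IJ (c : R) : -1 < c < 1 -> -1 <= c <= 1.
    by move=> /andP[? ?]; apply/andP; split; lra.
  have I0 : -1 < (0 : R) < 1 by apply/andP; split; lra.
  exact: (hcl_sub_leaf leaf_uniq oV omV VU hg hU om_def lev IJ I0).
- have IJ (c : R) : 0 <= c < 1 -> 0 <= c <= 1.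
    by move=> /andP[? ?]; apply/andP; split; lra.
  have I0 : 0 <= (0 : R) < 1 by apply/andP; split; lra.
  exact: (hcl_sub_leaf leaf_uniq oV omV VU hg hU om_def lev IJ I0).
Qed.
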